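(* Let $r,n,m,k$ be positive integers and $t=2^m$. Suppose there exists an $(r,t;n,m)$-DBAC of size $k$ in which every column of every array, viewed as a cyclic binary sequence of length $r$, has least period $r$ and even Hamming weight. Then there exists an $(r,t;n+1,m)$-DBAC of size $2^m k$.
   Context: Arrays are binary and cyclic (doubly periodic); an $n\times m$ window of an $r\times t$ array $A$ at position $(p,q)$ is the matrix with entries $A_{(p+u)\bmod r,(q+v)\bmod t}$, $0\le u<n$, $0\le v<m$. An $(r,t;n,m)$-DBAC (de Bruijn array code) of size $k$ is a set of $k$ binary $r\times t$ cyclic arrays such that every binary $n\times m$ matrix appears exactly once as a window in one of the arrays. *)

From mathcomp Require Import all_boot all_order all_algebra.
Set Implicit Arguments. Unset Strict Implicit. Unset Printing Implicit Defensive.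

Definition cget (r t : nat) (A : 'M[bool]_(r, t)) (a b : nat) : bool :=
  match @insub nat (fun x => x < r) 'I_r (a %% r),
        @insub nat (fun x => x < t) 'I_t (b %% t) with
  | Some i, Some j => A i j
  | _, _ => false
  end.

Definition window (n m r t : nat) (A : 'M[bool]_(r, t)) (p : 'I_r) (q : 'I_t)
  : 'M[bool]_(n, m) :=
  \matrix_(u < n, v < m) cget A (p + u) (q + v).

(* (r,t;n,m)-DBAC of size k: k distinct arrays (a set of k arrays), such that
   every binary n x m matrix appears exactly once as a window in one of them. *)
Definition is_DBAC (r t n m k : nat) (F : 'I_k -> 'M[bool]_(r, t)) : Prop :=
  injective F /\
  forall M : 'M[bool]_(n, m),
    #|[set x : 'I_k * 'I_r * 'I_t | window n m (F x.1.1) x.1.2 x.2 == M]| = 1.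

Definition col_least_period_r (r t : nat) (A : 'M[bool]_(r, t)) (j : 'I_t) : Prop :=
  forall d, 0 < d < r -> exists i : 'I_r, cget A (i + d) j != A i j.

Definition col_even_weight (r t : nat) (A : 'M[bool]_(r, t)) (j : 'I_t) : Prop :=
  ~~ odd #|[set i : 'I_r | A i j]|.

From mathcomp Require Import all_boot all_order all_algebra.
From mathcomp Require Import zify.
Set Implicit Arguments. Unset Strict Implicit. Unset Printing Implicit Defensive.

(* Integrating the columns of an array A modulo 2 from an arbitrary first row s,
   B(p, j) = s(j) + A(0, j) + ... + A(p-1, j), is consistent with the cyclic
   structure exactly because every column of A has even weight, and the row
   differences of each (n+1) x m window of B form the n x m window of A at the
   same position.  The first row is taken among the 2^m sequences
   s_c(j) = sum_(l < m) c_l C(j, l) mod 2.  They are 2^m-periodic because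
   C(2^m, l) is even for 0 < l < 2^m, and by Pascal's rule the difference
   sequence of s_c is s_c' with c' the shift of c, so any m consecutive values
   of s_c determine c.  Hence distinct choices of (c, array, position) give
   distinct (n+1) x m windows; as there are 2^m k r 2^m = 2^((n+1) m) choices,
   every window occurs exactly once. *)

Lemma odd_bin_2exp e l : 0 < l < 2 ^ e -> ~~ odd 'C(2 ^ e, l).
Proof.
case: l => // l /andP[_ lt_l]; apply/negP => odd_bin.
have cop : coprime (2 ^ e) 'C(2 ^ e, l.+1) by apply: coprimeXl; rewrite coprime2n.
have : 2 ^ e %| l.+1 by rewrite -(Gauss_dvdl _ cop) -mul_bin_diag dvdn_mulr.
by move/dvdn_leq => /(_ isT); rewrite leqNgt lt_l.
Qed.

Lemma odd_binD_2exp e x l : l < 2 ^ e -> odd 'C(2 ^ e + x, l) = odd 'C(x, l).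
Proof.
move=> lt_l; rewrite -binomial.Vandermonde big_ord_recl bin0 mul1n subn0 oddD.
suff /negbTE-> : ~~ odd (\sum_(j < l) 'C(2 ^ e, bump 0 j) * 'C(x, l - bump 0 j)).
  by rewrite addbF.
apply: (big_ind (fun y => ~~ odd y)) => // [y z|j _].
  by rewrite oddD => /negbTE-> /negbTE->.
rewrite oddM negb_and odd_bin_2exp // /bump /=; have := ltn_ord j; lia.
Qed.

Lemma odd_bin_mod_2exp e x l : l < 2 ^ e -> odd 'C(x %% 2 ^ e, l) = odd 'C(x, l).
Proof.
move=> lt_l; rewrite [in RHS](divn_eq x (2 ^ e)).
elim: (x %/ 2 ^ e) => [|d IH]; first by rewrite mul0n add0n.
by rewrite mulSn -addnA odd_binD_2exp.
Qed.

Definition pascal_seq d (c : nat -> bool) (x : nat) : bool :=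
  odd (\sum_(l < d) c l * 'C(x, l)).

Lemma pascal_seq_mod_2exp e d c x :
  d <= 2 ^ e -> pascal_seq d c (x %% 2 ^ e) = pascal_seq d c x.
Proof.
move=> le_d; rewrite /pascal_seq !(big_morph odd oddD (erefl : odd 0 = false)).
apply: eq_bigr => l _; rewrite !oddM odd_bin_mod_2exp //.
exact: leq_trans (ltn_ord l) le_d.
Qed.

Lemma pascal_seqS d c x :
  pascal_seq d.+1 c x.+1 = pascal_seq d.+1 c x (+) pascal_seq d (c \o succn) x.
Proof.
rewrite /pascal_seq !big_ord_recl /= !bin0 -oddD -addnA -big_split /=.
by congr (odd (_ + _)); apply: eq_bigr => l _; rewrite binS mulnDr.
Qed.

Lemma pascal_seq_window_inj d c1 c2 q :
  (forall v, v < d -> pascal_seq d c1 (q + v) = pascal_seq d c2 (q + v)) ->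
  forall l, l < d -> c1 l = c2 l.
Proof.
elim: d c1 c2 => // d IH c1 c2 E.
have shift c x :
    pascal_seq d (c \o succn) x = pascal_seq d.+1 c x (+) pascal_seq d.+1 c x.+1.
  by rewrite pascal_seqS addKb.
have E_succ : forall l, l < d -> c1 l.+1 = c2 l.+1.
  by apply: IH => v lt_v; rewrite !shift -addnS !E // ltnW.
case=> [_|l /E_succ //].
have := E 0 isT; rewrite /pascal_seq addn0 !big_ord_recl !bin0 !muln1 !oddD !oddb.
rewrite (eq_bigr (fun i : 'I_d => c2 (bump 0 i) * 'C(q, bump 0 i))) => [/addIb //|i _].
by rewrite E_succ.
Qed.

Definition row_diff {n m} (M : 'M[bool]_(n.+1, m)) : 'M[bool]_(n, m) :=
  \matrix_(u, v) (M (widen_ord (leqnSn n) u) v (+) M (lift ord0 u) v).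

Section CyclicArray.

Variables r t : nat.
Hypotheses (r_gt0 : 0 < r) (t_gt0 : 0 < t).
Implicit Type A : 'M[bool]_(r, t).

Lemma cgetE A a b (i : 'I_r) (j : 'I_t) :
  i = a %% r :> nat -> j = b %% t :> nat -> cget A a b = A i j.
Proof.
move=> Ei Ej; rewrite /cget.
case: insubP => [i' _ Ei'|]; last by rewrite /= -Ei ltn_ord.
case: insubP => [j' _ Ej'|]; last by rewrite /= -Ej ltn_ord.
by congr (A _ _); apply: val_inj; rewrite /= ?Ei' ?Ej'.
Qed.

Lemma cget_modr A a b : cget A a (b %% t) = cget A a b.
Proof. by rewrite /cget !modn_mod. Qed.

Lemma cget_modl A a b : cget A (a %% r) b = cget A a b.
Proof. by rewrite /cget !modn_mod. Qed.

Definition integrate A (s : nat -> bool) : 'M[bool]_(r, t) :=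
  \matrix_(p < r, j < t) (s j (+) odd (\sum_(u < p) cget A u j)).

Lemma cget_integrate A s a b :
  cget (integrate A s) a b = s (b %% t) (+) odd (\sum_(u < a %% r) cget A u b).
Proof.
rewrite (@cgetE _ a b (Ordinal (ltn_pmod a r_gt0)) (Ordinal (ltn_pmod b t_gt0))) //.
by rewrite mxE; under eq_bigr do rewrite cget_modr.
Qed.

Lemma odd_col_sum A b :
  (forall j, col_even_weight A j) -> odd (\sum_(u < r) cget A u b) = false.
Proof.
move=> even_A; set j := Ordinal (ltn_pmod b t_gt0); apply/negbTE.
rewrite (eq_bigr (fun u : 'I_r => nat_of_bool (A u j))) => [|u _]; last first.
  by rewrite (@cgetE _ u b u j) // modn_small.
by rewrite -big_mkcond /= sum1dep_card; apply: even_A.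
Qed.

Lemma cget_integrateS A s a b : (forall j, col_even_weight A j) ->
  cget (integrate A s) a.+1 b = cget (integrate A s) a b (+) cget A a b.
Proof.
move=> even_A; rewrite !cget_integrate -addbA; congr (_ (+) _).
have sumS : odd (\sum_(u < (a %% r).+1) cget A u b) =
            odd (\sum_(u < a %% r) cget A u b) (+) cget A a b.
  by rewrite big_ord_recr /= oddD oddb cget_modl.
have lt_a := ltn_pmod a r_gt0.
rewrite -sumS -addn1 -modnDml addn1.
case: (ltnP (a %% r).+1 r) => [/modn_small -> //|le_ra].
have -> : (a %% r).+1 = r by apply/eqP; rewrite eqn_leq le_ra lt_a.
by rewrite modnn big_ord0 odd_col_sum.
Qed.

Lemma row_diff_window n m A s p q : (forall j, col_even_weight A j) ->
  row_diff (window n.+1 m (integrate A s) p q) = window n m A p q.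
Proof.
move=> even_A; apply/matrixP => u v.
by rewrite !mxE lift0 addnS cget_integrateS // addKb.
Qed.

End CyclicArray.

Definition windows n m (T : finType) r t (F : T -> 'M[bool]_(r, t))
    (x : T * 'I_r * 'I_t) : 'M[bool]_(n, m) :=
  window n m (F x.1.1) x.1.2 x.2.

Lemma bij_card_preimage1P (aT rT : finType) (f : aT -> rT) :
  bijective f <-> forall y, #|[set x | f x == y]| = 1.
Proof.
split=> [[g fK gK] y|pre1].
  have -> : [set x | f x == y] = [set g y].
    by apply/setP => x; rewrite !inE -{1}(gK y) (can_eq fK).
  exact: cards1.
have inj_f : injective f.
  move=> x1 x2 E; have /eqP/cards1P[x0 Ex0] := pre1 (f x1).
  have in_pre x : f x == f x1 -> x = x0 by move=> Ex; apply/set1P; rewrite -Ex0 inE.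
  by rewrite (in_pre x1) // (in_pre x2) // E.
apply: (inj_card_bij inj_f); rewrite -(card_codom inj_f).
apply/subset_leq_card/subsetP => y _; have /eqP/cards1P[x Ex] := pre1 y.
by have := set11 x; rewrite -Ex inE => /eqP <-; rewrite codom_f.
Qed.

Lemma DBAC_of_bij_windows n m (T : finType) r t (H : T -> 'M[bool]_(r, t)) :
  0 < r -> 0 < t -> bijective (windows n m H) ->
  exists G : 'I_#|T| -> 'M[bool]_(r, t), is_DBAC n m G.
Proof.
move=> r_gt0 t_gt0 bijH; pose G : 'I_#|T| -> 'M[bool]_(r, t) := H \o enum_val.
have bijG : bijective (windows n m G).
  have -> : windows n m G =
            windows n m H \o (fun x => (enum_val x.1.1, x.1.2, x.2)) by [].
  apply: (bij_comp bijH).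
  by exists (fun x => (enum_rank x.1.1, x.1.2, x.2)) => -[[a p] q] /=;
    rewrite ?enum_valK ?enum_rankK.
exists G; split; last exact/bij_card_preimage1P.
move=> a b Gab.
have := bij_inj bijG (x1 := (a, Ordinal r_gt0, Ordinal t_gt0))
                    (x2 := (b, Ordinal r_gt0, Ordinal t_gt0)).
by rewrite /windows /= Gab => /(_ erefl) [].
Qed.

Definition pascal_lift r m (A : 'M[bool]_(r, 2 ^ m)) (w : m.-tuple bool) :=
  integrate A (pascal_seq m (nth false w)).

Lemma windows_pascal_lift_inj n r m (T : finType) (F : T -> 'M[bool]_(r, 2 ^ m)) :
  0 < r -> (forall i j, col_even_weight (F i) j) -> injective (windows n m F) ->
  injective (windows n.+1 m (fun x : m.-tuple bool * T => pascal_lift (F x.2) x.1)).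
Proof.
move=> r_gt0 even_F inj_F [[[w i] p] q] [[[w' i'] p'] q'] E.
have t_gt0 : 0 < 2 ^ m by rewrite expn_gt0.
have := congr1 row_diff E; rewrite /windows /= !row_diff_window //.
move=> /(inj_F (i, p, q) (i', p', q')) [Ei Ep Eq]; subst i' p' q'.
suff -> : w = w' by [].
have top v : v < m ->
    pascal_seq m (nth false w) (q + v) = pascal_seq m (nth false w') (q + v).
  move=> lt_v; have := congr1 (fun M : 'M[bool]_(n.+1, m) => M ord0 (Ordinal lt_v)) E.
  rewrite !mxE /= addn0 !cget_integrate // (modn_small (ltn_ord p)) => /addIb.
  by rewrite !pascal_seq_mod_2exp // ltnW // ltn_expl.
apply: val_inj; apply: (eq_from_nth (x0 := false)); rewrite !size_tuple // => l.
exact: pascal_seq_window_inj top l.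
Qed.

Theorem theorem10 (r n m k : nat) :
  0 < r -> 0 < n -> 0 < m -> 0 < k ->
  (exists F : 'I_k -> 'M[bool]_(r, 2 ^ m),
      is_DBAC n m F /\
      forall (i : 'I_k) (j : 'I_(2 ^ m)),
        col_least_period_r (F i) j /\ col_even_weight (F i) j) ->
  exists G : 'I_(2 ^ m * k) -> 'M[bool]_(r, 2 ^ m), is_DBAC (n + 1) m G.
Proof.
move=> r_gt0 _ _ _ [F [[_ dbacF] colF]].
have even_F i j : col_even_weight (F i) j := (colF i j).2.
have bijF : bijective (windows n m F) by apply/bij_card_preimage1P.
pose H (x : m.-tuple bool * 'I_k) := pascal_lift (F x.2) x.1.
have cardT : #|{: m.-tuple bool * 'I_k}| = 2 ^ m * k.
  by rewrite card_prod card_tuple card_bool card_ord.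
rewrite addn1 -cardT; apply: (@DBAC_of_bij_windows _ _ _ _ _ H) => //.
  by rewrite expn_gt0.
apply: inj_card_bij; first exact: windows_pascal_lift_inj (bij_inj bijF).
have := bij_eq_card bijF.
rewrite !card_prod !card_mx card_tuple !card_bool !card_ord mulSn expnD.
by move=> <-; rewrite !mulnA.
Qed.
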